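(* Let $T$ be a right $R$-module which is partial cosilting with respect to an injective copresentation $0\to T\to Q_0\xrightarrow{\zeta}Q_1$. Then there exist a right $R$-module $M$ and an injective copresentation $0\to T\oplus M\to Q_0'\xrightarrow{\zeta'}Q_1'$ such that $T\oplus M$ is cosilting with respect to $\zeta'$ and $\mathcal{B}_\zeta=\mathcal{B}_{\zeta'}$.
   Context: All modules are right modules over a unital associative ring $R$. For $\zeta:Q_0\to Q_1$, $\mathcal{B}_\zeta=\{X \mid \operatorname{Hom}_R(X,\zeta):\operatorname{Hom}_R(X,Q_0)\to\operatorname{Hom}_R(X,Q_1) \text{ is an epimorphism}\}$. $\operatorname{Cogen}(T)$ is the class of modules embeddable in a direct product of copies of $T$. An injective copresentation of $T$ is an exact sequence $0\to T\to Q_0\xrightarrow{\zeta}Q_1$ with $Q_0,Q_1$ injective. $T$ is partial cosilting with respect to $\zeta$ if $0\to T\to Q_0\xrightarrow{\zeta}Q_1$ is an injective copresentation, $T\in\mathcal{B}_\zeta$, and $\mathcal{B}_\zeta$ is closed under direct products; $T$ is cosilting with respect to $\zeta$ if $0\to T\to Q_0\xrightarrow{\zeta}Q_1$ is an injective copresentation and $\operatorname{Cogen}(T)=\mathcal{B}_\zeta$. *)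

(* Right R-modules are modelled as left modules over the
   converse ring R^c, i.e. as MathComp [lmodType R^c]. *)
From HB Require Import structures.
From mathcomp Require Import all_boot all_order all_algebra.
Set Implicit Arguments. Unset Strict Implicit. Unset Printing Implicit Defensive.
Import GRing.Theory.
Local Open Scope ring_scope.

Notation rmodType R := (lmodType (R^c)).

Definition injective_module (R : pzRingType) (Q : rmodType R) : Prop :=
  forall (A B : rmodType R) (f : {linear A -> B}) (g : {linear A -> Q}),
    injective f -> exists h : {linear B -> Q}, forall a, h (f a) = g a.

Definition injective_copresentation (R : pzRingType) (T Q0 Q1 : rmodType R)
  (iota : {linear T -> Q0}) (zeta : {linear Q0 -> Q1}) : Prop :=
  [/\ injective_module Q0, injective_module Q1, injective iota &
      forall q : Q0, zeta q = 0 <-> exists t : T, iota t = q].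

Definition B_class (R : pzRingType) (Q0 Q1 : rmodType R)
  (zeta : {linear Q0 -> Q1}) (X : rmodType R) : Prop :=
  forall g : {linear X -> Q1}, exists f : {linear X -> Q0},
    forall x, zeta (f x) = g x.

(* X is cogenerated by T: X embeds into a product T^I, i.e. there is a
   family of homomorphisms X -> T (the components of the embedding) which is
   jointly injective. *)
Definition Cogen (R : pzRingType) (T X : rmodType R) : Prop :=
  exists (I : Type) (f : I -> {linear X -> T}),
    forall x : X, (forall i, f i x = 0) -> x = 0.

Definition is_product (R : pzRingType) (I : Type) (Xs : I -> rmodType R)
  (P : rmodType R) (p : forall i, {linear P -> Xs i}) : Prop :=
  forall (Y : rmodType R) (g : forall i, {linear Y -> Xs i}),
    exists h : {linear Y -> P},
      (forall i y, p i (h y) = g i y) /\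
      (forall h' : {linear Y -> P}, (forall i y, p i (h' y) = g i y) ->
         forall y, h' y = h y).

Definition closed_under_products (R : pzRingType) (C : rmodType R -> Prop) : Prop :=
  forall (I : Type) (Xs : I -> rmodType R) (P : rmodType R)
         (p : forall i, {linear P -> Xs i}),
    is_product p -> (forall i, C (Xs i)) -> C P.

Definition partial_cosilting (R : pzRingType) (T Q0 Q1 : rmodType R)
  (iota : {linear T -> Q0}) (zeta : {linear Q0 -> Q1}) : Prop :=
  [/\ injective_copresentation iota zeta, B_class zeta T &
      closed_under_products (B_class zeta)].

Definition cosilting (R : pzRingType) (T Q0 Q1 : rmodType R)
  (iota : {linear T -> Q0}) (zeta : {linear Q0 -> Q1}) : Prop :=
  injective_copresentation iota zeta /\
  (forall X : rmodType R, Cogen T X <-> B_class zeta X).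

(* Let C = Hom_Z(R, Q/Z), an injective cogenerator, I = Hom(C, Q1), and let M
   be the kernel of C (+) Q0^I -> Q1^I, (c, q) |-> (phi c + zeta (q phi))_phi.
   Then 0 -> T (+) M -> Q0 (+) C (+) Q0^I -> Q1 (+) Q1^I is an injective
   copresentation, and its class B is B_zeta, since B_zeta is contained in the
   class of the second summand.  As B_zeta contains T and is closed under
   products, every map Q0^I -> Q1 is null-homotopic, which puts M in B_zeta;
   B_zeta is closed under submodules, so Cogen(T (+) M) is contained in B_zeta.
   Conversely, for X in B_zeta every map X -> C lifts to M, and C cogenerates,
   so M cogenerates X.  Injectivity of C is Baer's criterion over Z for the
   divisible group Q/Z, proved with Zorn's lemma. *)

From HB Require Import structures.
From mathcomp Require Import all_boot all_order all_algebra.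
From mathcomp Require Import boolp classical_sets functions.
Set Implicit Arguments. Unset Strict Implicit. Unset Printing Implicit Defensive.
Import GRing.Theory Num.Theory.
Local Open Scope ring_scope.
Local Open Scope classical_set_scope.

(** * The group Q/Z *)

Definition frac (r : rat) : rat := r - (Num.floor r)%:~R.

Lemma fracDz r (z : int) : frac (r + z%:~R) = frac r.
Proof.
rewrite /frac floorDrz ?intr_int // intrKfloor rmorphD /=.
by rewrite opprD addrACA subrr addr0.
Qed.

Lemma fracE r : frac r = r + (- Num.floor r)%:~R.
Proof. by rewrite /frac intrN. Qed.

Lemma frac_id r : frac (frac r) = frac r.
Proof. by rewrite {1}[frac r]fracE fracDz. Qed.

Lemma fracDl a b : frac (frac a + b) = frac (a + b).
Proof. by rewrite [frac a]fracE addrAC fracDz. Qed.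

Lemma fracDr a b : frac (a + frac b) = frac (a + b).
Proof. by rewrite addrC fracDl addrC. Qed.

Lemma fracN a : frac (- frac a) = frac (- a).
Proof. by rewrite [frac a]fracE opprD -intrN fracDz. Qed.

Lemma frac_int (z : int) : frac z%:~R = 0.
Proof. by rewrite -[z%:~R]add0r fracDz /frac floor0 subr0. Qed.

(* Q/Z, represented by the rationals in [0, 1). *)
Record qmodz := QModZ { qmodz_val : rat; _ : frac qmodz_val == qmodz_val }.
HB.instance Definition _ := [isSub for qmodz_val].
HB.instance Definition _ := [Choice of qmodz by <:].

Definition qmodz_of (r : rat) : qmodz := QModZ (introT eqP (frac_id r)).

Lemma qmodz_valK : cancel qmodz_val qmodz_of.
Proof. by case=> v fv; apply: val_inj => /=; apply/eqP. Qed.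

Lemma qmodz_of_eq a b : frac a = frac b -> qmodz_of a = qmodz_of b.
Proof. by move=> E; apply: val_inj. Qed.

Definition qmodz_add x y := qmodz_of (qmodz_val x + qmodz_val y).
Definition qmodz_opp x := qmodz_of (- qmodz_val x).

Lemma qmodz_addA : associative qmodz_add.
Proof. by move=> x y z; apply: qmodz_of_eq; rewrite /= fracDl fracDr addrA. Qed.

Lemma qmodz_addC : commutative qmodz_add.
Proof. by move=> x y; rewrite /qmodz_add addrC. Qed.

Lemma qmodz_add0 : left_id (qmodz_of 0) qmodz_add.
Proof.
by move=> x; rewrite -[RHS]qmodz_valK; apply: qmodz_of_eq; rewrite /= fracDl add0r.
Qed.

Lemma qmodz_addN : left_inverse (qmodz_of 0) qmodz_opp qmodz_add.
Proof. by move=> x; apply: qmodz_of_eq; rewrite /= fracDl addNr. Qed.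

HB.instance Definition _ :=
  GRing.isZmodule.Build qmodz qmodz_addA qmodz_addC qmodz_add0 qmodz_addN.

Lemma qmodz_of_is_zmod_morphism : zmod_morphism qmodz_of.
Proof. by move=> a b; apply: qmodz_of_eq; rewrite /= fracDl fracN fracDr. Qed.

HB.instance Definition _ :=
  GRing.isZmodMorphism.Build rat qmodz qmodz_of qmodz_of_is_zmod_morphism.

Lemma qmodz_of_int (z : int) : qmodz_of z%:~R = 0.
Proof. by apply: val_inj; rewrite /= frac_int /frac floor0 subr0. Qed.

Lemma qmodz_divisible (d : qmodz) (n : nat) : (0 < n)%N ->
  exists e : qmodz, e *+ n = d.
Proof.
move=> n_gt0; exists (qmodz_of (qmodz_val d / n%:R)).
by rewrite -raddfMn /= -[_ *+ n]mulr_natr divfK ?pnatr_eq0 -?lt0n // qmodz_valK.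
Qed.

Lemma qmodz_of_invn_neq0 (n : nat) : (1 < n)%N -> qmodz_of n%:R^-1 != 0.
Proof.
move=> n_gt1; apply/negP => /eqP /(congr1 qmodz_val) /=.
rewrite /frac (_ : Num.floor _ = 0) ?subr0.
  by apply/eqP; rewrite invr_eq0 pnatr_eq0 -lt0n ltnW.
apply: floor_def; rewrite add0r /= invr_ge0 ler0n /=.
by rewrite invf_lt1 ?ltr0n ?ltr1n // ltnW.
Qed.

Lemma qmodz_of_invnMn (n : nat) : (0 < n)%N -> qmodz_of n%:R^-1 *+ n = 0.
Proof.
move=> n_gt0; rewrite -raddfMn /= -[_ *+ n]mulr_natr mulVf ?pnatr_eq0 -?lt0n //.
exact: (qmodz_of_int 1).
Qed.

(** * Extending additive maps into a divisible group *)

Section DivisibleExtension.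
Variables (B D : zmodType).
Hypothesis D_divisible : forall (d : D) (n : nat), (0 < n)%N -> exists e : D, e *+ n = d.

Definition is_subgroup (S : set B) := S 0 /\ forall x y, S x -> S y -> S (x - y).

Definition additive_on (S : set B) (k : B -> D) :=
  forall x y, S x -> S y -> k (x - y) = k x - k y.

Lemma is_subgroup_set0 : is_subgroup [set 0].
Proof. by split => // x y -> ->; rewrite subrr. Qed.

Section Subgroup.
Variables (S : set B) (k : B -> D).
Hypotheses (S_subgroup : is_subgroup S) (k_additive : additive_on S k).

Lemma subgroup0 : S 0. Proof. by case: S_subgroup. Qed.

Lemma subgroupB x y : S x -> S y -> S (x - y).
Proof. by case: S_subgroup => _; apply. Qed.

Lemma subgroupN x : S x -> S (- x).
Proof. by rewrite -sub0r; apply/subgroupB/subgroup0. Qed.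

Lemma subgroupD x y : S x -> S y -> S (x + y).
Proof. by move=> Sx Sy; rewrite -[y]opprK; apply/subgroupB/subgroupN. Qed.

Lemma subgroupMz x m : S x -> S (x *~ m).
Proof.
move=> Sx; have SMn n : S (x *+ n).
  by elim: n => [|n IHn]; [exact: subgroup0 | rewrite mulrS; apply: subgroupD].
by case: m => n; rewrite ?NegzE ?mulrNz; [apply: SMn | apply/subgroupN/SMn].
Qed.

Lemma additive_on0 : k 0 = 0.
Proof. by have := k_additive subgroup0 subgroup0; rewrite !subrr. Qed.

Lemma additive_onN x : S x -> k (- x) = - k x.
Proof.
by move=> Sx; rewrite -[- x]sub0r k_additive ?additive_on0 ?sub0r //; apply: subgroup0.
Qed.

Lemma additive_onD x y : S x -> S y -> k (x + y) = k x + k y.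
Proof.
move=> Sx Sy; have S_y := subgroupN Sy.
by rewrite -{1}[y]opprK k_additive // additive_onN // opprK.
Qed.

Lemma additive_onMz x m : S x -> k (x *~ m) = k x *~ m.
Proof.
move=> Sx; have SMn n : S (x *+ n) := subgroupMz n Sx.
have kMn n : k (x *+ n) = k x *+ n.
  elim: n => [|n IHn]; first exact: additive_on0.
  by rewrite !mulrS additive_onD ?IHn.
case: m => n; first exact: kMn.
rewrite NegzE !mulrNz additive_onN; last exact: SMn.
by rewrite -!pmulrn kMn.
Qed.

Lemma order_modP b : (exists n, (0 < n)%N /\ S (b *+ n)) ->
  exists n, [/\ (0 < n)%N, S (b *+ n) & forall m, S (b *~ m) -> (n%:Z %| m)%Z].
Proof.
move=> exn; have exnb : exists n, (0 < n)%N && `[< S (b *+ n) >].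
  by case: exn => n [n_gt0 Sn]; exists n; rewrite n_gt0; apply/asboolP.
case: (ex_minnP exnb) => n /andP[n_gt0 /asboolP Sn] n_min.
exists n; split => // m Sm; apply/dvdz_mod0P.
have r_ge0 : 0 <= (m %% n)%Z by rewrite modz_ge0 // -lt0n n_gt0.
have r_lt : (m %% n)%Z < n by rewrite ltz_pmod // ltz_nat.
case Er: (m %% n)%Z r_ge0 r_lt => [[|r]|r] // _ r_lt.
have Sr : S (b *+ r.+1).
  have -> : b *+ r.+1 = b *~ m - (b *+ n) *~ (m %/ n)%Z.
    rewrite {1}(divz_eq m n) mulrzDr Er [(_ * _)%R]mulrC mulrzA.
    by rewrite addrAC subrr add0r.
  by apply: subgroupB => //; apply: subgroupMz.
have := n_min r.+1; rewrite (asboolT Sr) => /(_ isT).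
by rewrite leqNgt -ltz_nat r_lt.
Qed.

(* Divisibility of [D] enters here: [e] is an n-th root of [k (b *+ n)]. *)
Lemma exists_compatible_value b :
  exists e, forall m, S (b *~ m) -> k (b *~ m) = e *~ m.
Proof.
case: (pselect (exists n, (0 < n)%N /\ S (b *+ n))) => [exn|no_n].
  have [n [n_gt0 Sn n_dvd]] := order_modP exn.
  have [e e_n] := D_divisible (k (b *+ n)) n_gt0.
  exists e => m /[dup] Sm /n_dvd /dvdzP[q def_m]; move: Sm; rewrite def_m.
  have mulrzMn (M : zmodType) (x : M) : x *~ (q * n%:Z) = (x *+ n) *~ q.
    by rewrite mulrC mulrzA.
  by rewrite !mulrzMn => Sm; rewrite additive_onMz // e_n.
exists 0 => m Sm; rewrite mul0rz.
case: m Sm => [[|n]|n] Sm; first by rewrite additive_on0.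
  by case: no_n; exists n.+1.
case: no_n; exists n.+1; split => //.
by rewrite -[_ *+ _]opprK; apply: subgroupN; rewrite NegzE mulrNz in Sm.
Qed.

Section Adjoin.
Variables (b : B) (e : D).
Hypothesis e_compatible : forall m, S (b *~ m) -> k (b *~ m) = e *~ m.

Definition adjoin (y : B) := exists s m, S s /\ y = s + b *~ m.

Lemma adjoin_wd s s' m m' : S s -> S s' -> s + b *~ m = s' + b *~ m' ->
  k s + e *~ m = k s' + e *~ m'.
Proof.
move=> Ss Ss' E; have Ebm : b *~ (m - m') = s' - s.
  by rewrite mulrzBr; apply/eqP; rewrite subr_eq addrAC -E addrAC subrr add0r.
have := e_compatible (m := m - m'); rewrite Ebm => /(_ (subgroupB Ss' Ss)).
rewrite k_additive // mulrzBr => ks'_ks.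
by rewrite -[k s'](subrK (k s)) ks'_ks [RHS]addrAC subrK addrC.
Qed.

Definition adjoin_ext (y : B) : D :=
  if pselect (adjoin y) is left Hy then
    let (s, Hs) := cid Hy in let (m, _) := cid Hs in k s + e *~ m
  else 0.

Lemma adjoin_extE s m : S s -> adjoin_ext (s + b *~ m) = k s + e *~ m.
Proof.
move=> Ss; rewrite /adjoin_ext; case: pselect => [Hy|[]]; last by exists s, m.
case: (cid Hy) => s0 Hs; case: (cid Hs) => m0 [Ss0 E].
by apply: adjoin_wd => //; rewrite -E.
Qed.

Lemma adjoin_subgroup : is_subgroup adjoin.
Proof.
split; first by exists 0, 0; rewrite addr0; split => //; apply: subgroup0.
move=> _ _ [s1 [m1 [S1 ->]]] [s2 [m2 [S2 ->]]].
exists (s1 - s2), (m1 - m2); split; first exact: subgroupB.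
by rewrite mulrzBr opprD addrACA.
Qed.

Lemma adjoin_ext_additive : additive_on adjoin adjoin_ext.
Proof.
move=> _ _ [s1 [m1 [S1 ->]]] [s2 [m2 [S2 ->]]].
have -> : s1 + b *~ m1 - (s2 + b *~ m2) = (s1 - s2) + b *~ (m1 - m2).
  by rewrite mulrzBr opprD addrACA.
rewrite !adjoin_extE //; last exact: subgroupB.
by rewrite k_additive // mulrzBr opprD addrACA.
Qed.

Lemma adjoin_ext_gen : adjoin b /\ adjoin_ext b = e.
Proof.
have Eb : b = 0 + b *~ 1 by rewrite add0r.
split; first by exists 0, 1; split => //; apply: subgroup0.
by rewrite {1}Eb adjoin_extE ?additive_on0 ?add0r //; apply: subgroup0.
Qed.

Lemma adjoin_ext_extends x : S x -> adjoin x /\ adjoin_ext x = k x.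
Proof.
have Ex : x = x + b *~ 0 by rewrite addr0.
by move=> Sx; split; [exists x, 0 | rewrite {1}Ex adjoin_extE // addr0].
Qed.

End Adjoin.
End Subgroup.

Section Zorn.
Variables (S0 : set B) (k0 : B -> D).
Hypotheses (S0_subgroup : is_subgroup S0) (k0_additive : additive_on S0 k0).

Definition partial_extension (p : set B * (B -> D)) :=
  [/\ is_subgroup p.1, additive_on p.1 p.2, S0 `<=` p.1 &
      forall x, S0 x -> p.2 x = k0 x].

Definition extension_le (p q : {p | partial_extension p}) : bool :=
  `[< (sval p).1 `<=` (sval q).1 /\
      forall x, (sval p).1 x -> (sval q).2 x = (sval p).2 x >].

Lemma extension_le_refl : reflexive extension_le.
Proof. by move=> p; apply/asboolP; split. Qed.

Lemma extension_le_trans p q r :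
  extension_le p q -> extension_le q r -> extension_le p r.
Proof.
move=> /asboolP[pq1 pq2] /asboolP[qr1 qr2]; apply/asboolP; split.
  by move=> x /pq1 /qr1.
by move=> x px; rewrite qr2 ?pq2 //; apply: pq1.
Qed.

Section Chain.
Variable A : set {p | partial_extension p}.
Hypotheses (A_total : total_on A extension_le) (A_neq0 : A !=set0).

Definition chain_dom (x : B) := exists2 p, A p & (sval p).1 x.

Definition chain_map (x : B) : D :=
  if pselect (chain_dom x) is left Hx then (sval (projT1 (cid2 Hx))).2 x else 0.

Lemma chain_mapE p x : A p -> (sval p).1 x -> chain_map x = (sval p).2 x.
Proof.
move=> Ap px; rewrite /chain_map; case: pselect => [Hx|[]]; last by exists p.
case: (cid2 Hx) => q Aq qx /=.
by case: (A_total Ap Aq) => /asboolP[pq1 pq2]; rewrite ?pq2 // -pq2.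
Qed.

Lemma chain_dom2 x y : chain_dom x -> chain_dom y ->
  exists p, [/\ A p, (sval p).1 x & (sval p).1 y].
Proof.
move=> [p Ap px] [q Aq qy].
by case: (A_total Ap Aq) => /asboolP[pq _]; [exists q | exists p]; split => //; apply: pq.
Qed.

Lemma chain_union_extension : partial_extension (chain_dom, chain_map).
Proof.
case: A_neq0 => p0 Ap0; have [[p0_0 _] _ S0p0 p0_k0] := svalP p0.
split => /=.
- split; first by exists p0.
  move=> x y /chain_dom2 /[apply] -[p [Ap px py]].
  by exists p => //; case: (svalP p) => -[_ pB] _ _ _; apply: pB.
- move=> x y /chain_dom2 /[apply] -[p [Ap px py]].
  case: (svalP p) => -[_ pB] p_additive _ _.
  by rewrite !(chain_mapE Ap) //; [apply: p_additive | apply: pB].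
- by move=> x /S0p0 p0x; exists p0.
- by move=> x S0x; rewrite (chain_mapE Ap0) ?p0_k0 //; apply: S0p0.
Qed.

Lemma chain_upper_bound : exists q, forall p, A p -> extension_le p q.
Proof.
exists (exist _ _ chain_union_extension) => p Ap; apply/asboolP; split => /=.
  by move=> x px; exists p.
by move=> x px; rewrite (chain_mapE Ap).
Qed.

End Chain.

Lemma additive_extension : exists k : B -> D,
  zmod_morphism k /\ forall x, S0 x -> k x = k0 x.
Proof.
have p0_ext : partial_extension (S0, k0) by split.
pose p0 := exist _ _ p0_ext.
have chains A : total_on A extension_le -> exists q, forall p, A p -> extension_le p q.
  move=> A_total; have [A_neq0|A0] := pselect (A !=set0).
    exact: chain_upper_bound.
  by exists p0 => p Ap; case: A0; exists p.
have [p p_max] := ZL_preorder p0 extension_le_refl extension_le_trans chains.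
case: (svalP p) => p_subgroup p_additive S0p p_k0.
suff p_full : forall b, (sval p).1 b.
  by exists (sval p).2; split => [x y|//]; apply: p_additive.
move=> b; have [e e_compatible] := exists_compatible_value p_subgroup p_additive b.
have extends := adjoin_ext_extends p_subgroup p_additive e_compatible.
have q_ext : partial_extension (adjoin (sval p).1 b, adjoin_ext (sval p).1 (sval p).2 b e).
  split => /=.
  - exact: adjoin_subgroup.
  - exact: adjoin_ext_additive.
  - by move=> x /S0p /extends[].
  - by move=> x S0x; rewrite -p_k0 //; case: (extends _ (S0p _ S0x)).
have pq : extension_le p (exist _ _ q_ext).
  by apply/asboolP; split => /= x /extends[].
have /asboolP[qp _] := p_max _ pq; apply: qp => /=.
by case: (adjoin_ext_gen p_subgroup p_additive e_compatible).
Qed.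

End Zorn.
End DivisibleExtension.

(** * Q/Z is an injective cogenerator of abelian groups *)

Definition additive_of (U V : zmodType) (f : U -> V) (fM : zmod_morphism f) :
  {additive U -> V} := HB.pack f (GRing.isZmodMorphism.Build U V f fM).

Lemma qmodz_injective (A B : zmodType) (f : {additive A -> B})
    (g : {additive A -> qmodz}) :
  injective f -> exists k : {additive B -> qmodz}, forall a, k (f a) = g a.
Proof.
move=> f_inj; pose k0 b := if pselect (exists a, f a = b) is left Hb
  then g (projT1 (cid Hb)) else 0.
have k0E a : k0 (f a) = g a.
  rewrite /k0; case: pselect => [Hb|[]]; last by exists a.
  by case: (cid Hb) => a' /= /f_inj ->.
have im_subgroup : is_subgroup [set f a | a in setT].
  split; first by exists 0; rewrite ?raddf0.
  by move=> _ _ [a _ <-] [b _ <-]; exists (a - b); rewrite ?raddfB.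
have k0_additive : additive_on [set f a | a in setT] k0.
  by move=> _ _ [a _ <-] [b _ <-]; rewrite -raddfB !k0E raddfB.
have [k [kM kE]] := additive_extension qmodz_divisible im_subgroup k0_additive.
by exists (additive_of kM) => a; rewrite /= kE ?k0E //; exists a.
Qed.

Lemma qmodz_separates (A : zmodType) (x : A) : x != 0 ->
  exists2 e : qmodz, e != 0 & forall m, x *~ m = 0 -> e *~ m = 0.
Proof.
move=> x_neq0; have [exn|no_n] := pselect (exists n, (0 < n)%N /\ x *+ n = 0).
  have [n [n_gt0 xn n_dvd]] := order_modP (is_subgroup_set0 A) exn.
  have n_gt1 : (1 < n)%N.
    case: n n_gt0 xn {n_dvd} => [|[|n]] // _ /=.
    by rewrite mulr1n => x0; rewrite x0 eqxx in x_neq0.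
  exists (qmodz_of n%:R^-1); first exact: qmodz_of_invn_neq0.
  move=> m /n_dvd /dvdzP[q ->].
  by rewrite mulrC mulrzA -pmulrn qmodz_of_invnMn // mul0rz.
exists (qmodz_of 2%:R^-1); first exact: qmodz_of_invn_neq0.
case=> [[|n]|n] // xm; case: no_n; exists n.+1; split => //.
by rewrite NegzE mulrNz in xm; rewrite -[_ *+ _]opprK xm oppr0.
Qed.

Lemma qmodz_cogenerator (A : zmodType) (x : A) : x != 0 ->
  exists k : {additive A -> qmodz}, k x != 0.
Proof.
move=> x_neq0; have [e e_neq0 e_compatible] := qmodz_separates x_neq0.
pose k0 (y : A) : qmodz := 0.
have k0_additive : additive_on [set 0] k0 by move=> ? ? _ _; rewrite /k0 subrr.
have e_compat m : [set 0] (x *~ m) -> k0 (x *~ m) = e *~ m.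
  by move=> /e_compatible ->.
have S0 := is_subgroup_set0 A.
have [k [kM kE]] := additive_extension qmodz_divisible
  (adjoin_subgroup S0 x) (adjoin_ext_additive S0 k0_additive e_compat).
have [x_adj kx] := adjoin_ext_gen S0 k0_additive e_compat.
by exists (additive_of kM); rewrite /= kE // kx.
Qed.

Definition linmap (R : pzRingType) (A B : rmodType R) (f : A -> B) (fL : linear f) :
  {linear A -> B} := HB.pack f (GRing.isLinear.Build R^c A B *:%R f fL).

Section LinearMaps.
Variable R : pzRingType.

Definition proj_fun (I : Type) (X : rmodType R) (i : I) : {linear (I -> X) -> X} :=
  linmap (fun (a : R^c) (f g : I -> X) => erefl : (a *: f + g) i = a *: f i + g i).

Lemma postcomp_linear (I : Type) (A B : rmodType R) (f : {linear A -> B}) :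
  linear (fun (q : I -> A) i => f (q i)).
Proof. by move=> a q q'; apply: funext => i /=; rewrite linearP. Qed.

Definition postcomp (I : Type) (A B : rmodType R) (f : {linear A -> B}) :
  {linear (I -> A) -> (I -> B)} := linmap (postcomp_linear (I := I) f).

Section Pointwise.
Variables (I : Type) (Y X : rmodType R) (F : I -> {linear Y -> X}).

Lemma lin_fam_linear : linear (fun y i => F i y).
Proof. by move=> a y y'; apply: funext => i /=; rewrite linearP. Qed.

Definition lin_fam : {linear Y -> (I -> X)} := linmap lin_fam_linear.

End Pointwise.

Section Pairs.
Variables (Y A B : rmodType R).

Lemma lin_pair_linear (f : {linear Y -> A}) (g : {linear Y -> B}) :
  linear (fun y => (f y, g y)).
Proof. by move=> a y y'; rewrite !linearP. Qed.

Definition lin_pair f g : {linear Y -> (A * B)%type} := linmap (lin_pair_linear f g).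

Lemma inl_linear : linear (fun a : A => (a, 0 : B)).
Proof. by move=> r a a'; apply/pair_equal_spec; rewrite /= scaler0 addr0. Qed.

Lemma inr_linear : linear (fun b : B => (0 : A, b)).
Proof. by move=> r b b'; apply/pair_equal_spec; rewrite /= scaler0 addr0. Qed.

Definition lin_inl : {linear A -> (A * B)%type} := linmap inl_linear.
Definition lin_inr : {linear B -> (A * B)%type} := linmap inr_linear.

Lemma lin_prodmap_linear (C D : rmodType R) (f : {linear A -> C}) (g : {linear B -> D}) :
  linear (fun u : A * B => (f u.1, g u.2)).
Proof. by move=> r u v; rewrite !linearP. Qed.

Definition lin_prodmap (C D : rmodType R) (f : {linear A -> C}) (g : {linear B -> D}) :
  {linear (A * B)%type -> (C * D)%type} :=
  linmap (@lin_prodmap_linear C D f g).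

Lemma lin_inl_inr (a : A) (b : B) : (a, b) = lin_inl a + lin_inr b.
Proof. by apply/pair_equal_spec; rewrite /= addr0 add0r. Qed.

End Pairs.

End LinearMaps.

(** * The character module *)

Section CharacterModule.
Variable R : pzRingType.

Definition additive_fun : {pred R -> qmodz} := fun f => `[< zmod_morphism f >].

Lemma additive_fun_zmod_closed : zmod_closed additive_fun.
Proof.
split; first by rewrite unfold_in; apply/asboolP => x y; rewrite subrr.
move=> f g; rewrite !unfold_in => /asboolP fM /asboolP gM; apply/asboolP => x y /=.
by rewrite !fctE fM gM !opprB addrACA [RHS]addrACA [- f y + _]addrC.
Qed.

HB.instance Definition _ :=
  GRing.isZmodClosed.Build _ additive_fun additive_fun_zmod_closed.

Record charmod := CharMod { char_fun :> R -> qmodz; _ : char_fun \in additive_fun }.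
HB.instance Definition _ := [isSub for char_fun].
HB.instance Definition _ := [Choice of charmod by <:].
HB.instance Definition _ := [SubChoice_isSubZmodule of charmod by <:].

Lemma char_funP (f : charmod) : zmod_morphism f.
Proof. by case: f => f /= /[!unfold_in] /asboolP. Qed.

Definition char_scale_fun (r : R) (f : charmod) (s : R) : qmodz := f (r * s).

Lemma char_scale_fun_additive r f : char_scale_fun r f \in additive_fun.
Proof.
by rewrite unfold_in; apply/asboolP => x y; rewrite /char_scale_fun mulrBr char_funP.
Qed.

Definition char_scale (r : R^c) (f : charmod) := CharMod (char_scale_fun_additive r f).

Lemma char_scaleA a b f : char_scale a (char_scale b f) = char_scale (a * b) f.
Proof. by apply: val_inj; apply: funext => s /=; rewrite /char_scale_fun /= mulrA. Qed.

Lemma char_scale1 : left_id 1 char_scale.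
Proof.
by move=> f; apply: val_inj; apply: funext => s /=; rewrite /char_scale_fun mul1r.
Qed.

Lemma char_scaleDr : right_distributive char_scale +%R.
Proof. by move=> a f g; apply: val_inj; apply: funext. Qed.

Lemma char_scaleDl f : {morph char_scale^~ f : a b / a + b}.
Proof.
move=> a b; apply: val_inj; apply: funext => s /=.
rewrite /char_scale_fun /= mulrDl; exact: (raddfD (additive_of (char_funP f))).
Qed.

HB.instance Definition _ := GRing.Zmodule_isLmodule.Build R^c charmod
  char_scaleA char_scale1 char_scaleDr char_scaleDl.

Section Lift.
Variables (X : rmodType R) (k : {additive X -> qmodz}).

Lemma char_lift_fun_additive (x : X) : (fun s : R => k ((s : R^c) *: x)) \in additive_fun.
Proof. by rewrite unfold_in; apply/asboolP => s t; rewrite scalerBl raddfB. Qed.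

Lemma char_lift_linear : linear (fun x => CharMod (char_lift_fun_additive x)).
Proof.
by move=> a x y; apply: val_inj; apply: funext => s /=; rewrite scalerDr scalerA raddfD.
Qed.

Definition char_lift : {linear X -> charmod} := linmap char_lift_linear.

Lemma char_liftE x s : char_lift x s = k ((s : R^c) *: x).
Proof. by []. Qed.

End Lift.

Lemma charmod_injective : injective_module charmod.
Proof.
move=> A B f g f_inj.
pose g1 := additive_of (fun x y => congr1 (fun h : charmod => h 1) (raddfB g x y)).
have [k kf] := qmodz_injective (f := f) g1 f_inj.
exists (char_lift k) => a; apply: val_inj; apply: funext => s /=.
by rewrite -linearZ_LR kf /= linearZ_LR /= /char_scale_fun mulr1.
Qed.

Lemma charmod_cogenerator (X : rmodType R) (x : X) : x != 0 ->
  exists h : {linear X -> charmod}, h x != 0.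
Proof.
move=> /qmodz_cogenerator[k kx]; exists (char_lift k).
apply: contra kx => /eqP /(congr1 (fun h : charmod => h 1)).
by rewrite char_liftE scale1r => ->.
Qed.

End CharacterModule.

Section InjectiveModules.
Variable R : pzRingType.

Lemma fun_is_product (I : Type) (X : rmodType R) : is_product (@proj_fun R I X).
Proof.
move=> Y g; exists (lin_fam g); split => // h hg y.
by apply: funext => i; apply: hg.
Qed.

Lemma injective_module_fun (I : Type) (Q : rmodType R) :
  injective_module Q -> injective_module (I -> Q).
Proof.
move=> Q_inj A B f g f_inj.
have /choice[H HE] i : exists h : {linear B -> Q}, forall a, h (f a) = g a i.
  exact: (Q_inj _ _ f (proj_fun Q i \o g) f_inj).
by exists (lin_fam H) => a; apply: funext => i /=; rewrite HE.
Qed.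

Lemma injective_module_pair (Q Q' : rmodType R) :
  injective_module Q -> injective_module Q' -> injective_module (Q * Q')%type.
Proof.
move=> Q_inj Q'_inj A B f g f_inj.
have [h hE] := Q_inj _ _ f (fst \o g) f_inj.
have [h' h'E] := Q'_inj _ _ f (snd \o g) f_inj.
by exists (lin_pair h h') => a /=; rewrite hE h'E /=; case: (g a).
Qed.

Section Kernel.
Variables (V W : rmodType R) (h : {linear V -> W}).

Definition kerpred : {pred V} := fun v => h v == 0.

Lemma kerpred_submod_closed : submod_closed kerpred.
Proof.
split; first by rewrite unfold_in /= linear0.
by move=> a x y; rewrite !unfold_in /= linearP => /eqP-> /eqP->; rewrite scaler0 addr0.
Qed.

HB.instance Definition _ := GRing.isSubmodClosed.Build _ _ kerpred kerpred_submod_closed.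

Record kermod := KerMod { kerval :> V; _ : kerval \in kerpred }.
HB.instance Definition _ := [isSub for kerval].
HB.instance Definition _ := [Choice of kermod by <:].
HB.instance Definition _ := [SubChoice_isSubLmodule of kermod by <:].

Lemma kervalP (m : kermod) : h (kerval m) = 0.
Proof. by case: m => v /=; rewrite unfold_in => /eqP. Qed.

Definition kerinj : {linear kermod -> V} :=
  linmap (f := kerval) (fun _ _ _ => erefl).

Lemma kerinj_inj : injective kerinj. Proof. exact: val_inj. Qed.

End Kernel.

Section Image.
Variables (A B : rmodType R) (p : {linear A -> B}).

Definition impred : {pred B} := fun y => `[< exists a, p a = y >].

Lemma impred_submod_closed : submod_closed impred.
Proof.
split; first by rewrite unfold_in; apply/asboolP; exists 0; rewrite linear0.
move=> r x y; rewrite !unfold_in => /asboolP[a <-] /asboolP[b <-].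
by apply/asboolP; exists (r *: a + b); rewrite linearP.
Qed.

HB.instance Definition _ := GRing.isSubmodClosed.Build _ _ impred impred_submod_closed.

Record immod := ImMod { imval :> B; _ : imval \in impred }.
HB.instance Definition _ := [isSub for imval].
HB.instance Definition _ := [Choice of immod by <:].
HB.instance Definition _ := [SubChoice_isSubLmodule of immod by <:].

Lemma imvalP (y : immod) : exists a, p a = imval y.
Proof. by case: y => y /=; rewrite unfold_in => /asboolP. Qed.

Definition iminj : {linear immod -> B} :=
  linmap (f := imval) (fun _ _ _ => erefl).

End Image.

Lemma injective_module_factor (A B Q : rmodType R) (p : {linear A -> B})
    (chi : {linear A -> Q}) :
  injective_module Q -> (forall a, p a = 0 -> chi a = 0) ->
  exists b : {linear B -> Q}, forall a, b (p a) = chi a.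
Proof.
move=> Q_inj chi_ker.
have chi_wd a a' : p a = p a' -> chi a = chi a'.
  move=> E; apply/eqP; rewrite -subr_eq0 -linearB; apply/eqP/chi_ker.
  by rewrite linearB E subrr.
pose psi (y : immod p) : Q := chi (projT1 (cid (imvalP y))).
have psiE a (y : immod p) : p a = imval y -> psi y = chi a.
  by move=> E; rewrite /psi; case: cid => a' /= E'; apply: chi_wd; rewrite E'.
have psi_linear : linear psi.
  move=> r y z; have [a Ea] := imvalP y; have [b Eb] := imvalP z.
  have Eyz : p (r *: a + b) = imval (r *: y + z).
    by rewrite linearP Ea Eb; symmetry; apply: (linearP (iminj p)).
  by rewrite (psiE _ _ Ea) (psiE _ _ Eb) (psiE _ _ Eyz) linearP.
have [b bE] := Q_inj _ _ (iminj p) (linmap psi_linear) val_inj.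
have in_im a : p a \in impred p by rewrite unfold_in; apply/asboolP; exists a.
by exists b => a; rewrite -[p a]/(iminj p (ImMod (in_im a))) bE /= (psiE a).
Qed.

Section BClass.
Variables (Q0 Q1 : rmodType R) (zeta : {linear Q0 -> Q1}).

Lemma B_class_sub (X Y : rmodType R) (e : {linear X -> Y}) :
  injective_module Q1 -> injective e -> B_class zeta Y -> B_class zeta X.
Proof.
move=> Q1_inj e_inj BY g.
have [h hE] := Q1_inj _ _ e g e_inj.
have [f fE] := BY h.
by exists (f \o e) => x /=; rewrite fE hE.
Qed.

Lemma B_class_pair (X Y : rmodType R) :
  B_class zeta X -> B_class zeta Y -> B_class zeta (X * Y)%type.
Proof.
move=> BX BY g.
have [f1 f1E] := BX (g \o lin_inl X Y).
have [f2 f2E] := BY (g \o lin_inr X Y).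
have fL : linear (fun u : X * Y => f1 u.1 + f2 u.2).
  by move=> a u v; rewrite !linearP addrACA scalerDr.
by exists (linmap fL) => -[x y]; rewrite linearD /= f1E f2E /= -linearD -lin_inl_inr.
Qed.

Lemma B_class_postcomp (I : Type) (X : rmodType R) :
  B_class zeta X -> B_class (postcomp I zeta) X.
Proof.
move=> BX g; have /choice[F FE] i := BX (proj_fun Q1 i \o g).
by exists (lin_fam F) => x; apply: funext => i /=; rewrite FE.
Qed.

End BClass.

Lemma B_class_prodmap (Q0 Q1 Q0' Q1' : rmodType R) (zeta : {linear Q0 -> Q1})
    (zeta' : {linear Q0' -> Q1'}) (X : rmodType R) :
  B_class (lin_prodmap zeta zeta') X <-> B_class zeta X /\ B_class zeta' X.
Proof.
split=> [BX | [BX BX'] g].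
  split=> g.
    have [f fE] := BX (lin_inl _ Q1' \o g).
    by exists (fst \o f) => x; have /pair_equal_spec[] := fE x.
  have [f fE] := BX (lin_inr Q1 _ \o g).
  by exists (snd \o f) => x; have /pair_equal_spec[] := fE x.
have [f fE] := BX (fst \o g); have [f' f'E] := BX' (snd \o g).
by exists (lin_pair f f') => x; rewrite /= fE f'E /=; case: (g x).
Qed.
End InjectiveModules.

(** * The cosilting completion *)

Section Completion.
Variables (R : pzRingType) (T Q0 Q1 : rmodType R).
Variables (iota : {linear T -> Q0}) (zeta : {linear Q0 -> Q1}).
Hypothesis T_partial : partial_cosilting iota zeta.

Let copres : injective_copresentation iota zeta. Proof. by case: T_partial. Qed.
Let Q0_inj : injective_module Q0. Proof. by case: copres. Qed.
Let Q1_inj : injective_module Q1. Proof. by case: copres. Qed.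
Let iota_inj : injective iota. Proof. by case: copres. Qed.
Let ker_zeta q : zeta q = 0 <-> exists t, iota t = q. Proof. by case: copres. Qed.
Let B_T : B_class zeta T. Proof. by case: T_partial. Qed.
Let B_prod : closed_under_products (B_class zeta). Proof. by case: T_partial. Qed.

Lemma B_class_fun (I : Type) (X : rmodType R) :
  B_class zeta X -> B_class zeta (I -> X).
Proof. by move=> BX; apply: (B_prod (@fun_is_product R I X)). Qed.

(* chi iota^I lifts along zeta because T^I is in B_zeta; the remainder vanishes
   on ker zeta^I = im iota^I, hence factors through zeta^I. *)
Lemma null_homotopic (I : Type) (chi : {linear (I -> Q0) -> Q1}) :
  exists (a : {linear (I -> Q0) -> Q0}) (b : {linear (I -> Q1) -> Q1}),
    forall q, chi q = zeta (a q) + b (postcomp I zeta q).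
Proof.
have iotaI_inj : injective (postcomp I iota).
  by move=> t t' /= E; apply: funext => i; apply: iota_inj; have := congr1 (fun f => f i) E.
have [a0 a0E] := B_class_fun (I := I) B_T (chi \o postcomp I iota).
have [a aE] := Q0_inj a0 iotaI_inj.
have dL : linear (fun q => chi q - zeta (a q)).
  by move=> r q q'; rewrite (linearP chi) (linearP a) (linearP zeta) scalerBr addrACA opprD.
have [b bE] : exists b : {linear (I -> Q1) -> Q1},
    forall q, b (postcomp I zeta q) = chi q - zeta (a q).
  apply: (injective_module_factor (chi := linmap dL) Q1_inj) => q /= zq0.
  have /choice[t tE] i : exists t, iota t = q i.
    by apply/ker_zeta; have := congr1 (fun f => f i) zq0.
  have -> : q = postcomp I iota t by apply: funext => i /=; rewrite tE.
  by rewrite aE a0E subrr.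
by exists a, b => q; rewrite bE addrC subrK.
Qed.

Local Notation C := (charmod R).

Definition hom_C_Q1 := {linear C -> Q1}.

Definition eval_at : {linear C -> (hom_C_Q1 -> Q1)} := lin_fam (fun phi => phi).

Definition E0 := (C * (hom_C_Q1 -> Q0))%type.

Lemma zetaM_linear : linear (fun e : E0 => eval_at e.1 + postcomp hom_C_Q1 zeta e.2).
Proof. by move=> r e e'; rewrite !linearP scalerDr addrACA. Qed.

Definition zetaM : {linear E0 -> (hom_C_Q1 -> Q1)} := linmap zetaM_linear.

Definition M := kermod zetaM.

Lemma M_rel (m : M) (phi : hom_C_Q1) : phi (kerval m).1 + zeta ((kerval m).2 phi) = 0.
Proof. by have := kervalP m => /(congr1 (fun f => f phi)). Qed.

Lemma M_in_B : B_class zeta M.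
Proof.
move=> g; have [gt gtE] := Q1_inj g (kerinj_inj (h := zetaM)).
pose phi : hom_C_Q1 := gt \o lin_inl C (hom_C_Q1 -> Q0).
have chiL : linear (fun q => gt (lin_inr C (hom_C_Q1 -> Q0) q) - zeta (proj_fun Q0 phi q)).
  move=> r q q'; rewrite [lin_inr _ _ _]linearP [gt _]linearP.
  rewrite [proj_fun _ _ _]linearP [zeta _]linearP.
  by rewrite scalerBr addrACA opprD.
have [a [b abE]] := null_homotopic (linmap chiL).
pose phi' : hom_C_Q1 := b \o eval_at.
have fL : linear (fun m : M => a (kerval m).2 + (kerval m).2 phi').
  by move=> r m m'; rewrite linearP addrACA scalerDr.
(* On (c, q) in M the relations of M turn phi c and phi' c into
   - zeta (q phi) and - zeta (q phi'). *)
exists (linmap fL) => -[[c q] Mcq]; rewrite -gtE /=.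
have rel := M_rel (KerMod Mcq); rewrite /= in rel.
have zetaI_q : postcomp hom_C_Q1 zeta q = - eval_at c.
  by apply: funext => i /=; apply/eqP; rewrite -subr_eq0 opprK addrC rel.
have gt_q : gt (lin_inr C (hom_C_Q1 -> Q0) q) = zeta (a q) - phi' c + zeta (q phi).
  by rewrite -[RHS]/(zeta (a q) - b (eval_at c) + _) -linearN -zetaI_q -abE /= subrK.
have neg_rel (i : hom_C_Q1) : i c = - zeta (q i).
  by apply/eqP; rewrite -subr_eq0 opprK rel.
have gt_cq : gt (c, q) = phi c + gt (lin_inr C (hom_C_Q1 -> Q0) q).
  by rewrite (@lin_inl_inr _ C (hom_C_Q1 -> Q0)) linearD.
by rewrite gt_cq gt_q linearD !neg_rel opprK [RHS]addrC addrK.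
Qed.

Definition iota' : {linear (T * M)%type -> (Q0 * E0)%type} :=
  lin_prodmap iota (kerinj zetaM).
Definition zeta' : {linear (Q0 * E0)%type -> (Q1 * (hom_C_Q1 -> Q1))%type} :=
  lin_prodmap zeta zetaM.

Lemma completion_copresentation : injective_copresentation iota' zeta'.
Proof.
split.
- apply: injective_module_pair => //; apply: injective_module_pair.
    exact: charmod_injective.
  exact: injective_module_fun.
- by apply: injective_module_pair => //; apply: injective_module_fun.
- by move=> [t m] [t' m'] /pair_equal_spec[/= /iota_inj -> /kerinj_inj ->].
- move=> [q e]; split=> [/pair_equal_spec[/= /ker_zeta[t <-] zetaM_e] | [[t m]]].
    have Me : e \in kerpred zetaM by rewrite unfold_in; apply/eqP.
    by exists (t, KerMod Me).
  move=> /pair_equal_spec[/= <- <-].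
  by apply/pair_equal_spec; split; [apply/ker_zeta; exists t | exact: (kervalP m)].
Qed.

Lemma zetaM_inr (q : hom_C_Q1 -> Q0) :
  zetaM (lin_inr C _ q) = postcomp hom_C_Q1 zeta q.
Proof. by apply: funext => phi; rewrite -[LHS]/(phi 0 + zeta (q phi)) linear0 add0r. Qed.

Lemma B_class_zetaM (X : rmodType R) : B_class zeta X -> B_class zetaM X.
Proof.
move=> /(B_class_postcomp (I := hom_C_Q1)) BX g; have [f fE] := BX g.
by exists (lin_inr C _ \o f) => x; rewrite -fE; exact: zetaM_inr.
Qed.

Lemma B_class_completion (X : rmodType R) : B_class zeta X <-> B_class zeta' X.
Proof.
rewrite B_class_prodmap; split=> [BX | [] //].
by split=> //; apply: B_class_zetaM.
Qed.

Lemma Cogen_B_class (X : rmodType R) : Cogen (T * M)%type X -> B_class zeta X.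
Proof.
move=> [I [f f_inj]]; have fam_inj : injective (lin_fam f).
  move=> x y /(congr1 (fun F => F - lin_fam f y)); rewrite subrr -linearB => fxy0.
  apply/eqP; rewrite -subr_eq0; apply/eqP/f_inj => i.
  by have := congr1 (fun F => F i) fxy0.
apply: B_class_sub Q1_inj fam_inj _; apply: B_class_fun.
exact: B_class_pair B_T M_in_B.
Qed.

Lemma B_class_lift_M (X : rmodType R) (h : {linear X -> C}) : B_class zeta X ->
  exists mh : {linear X -> M}, forall x, (kerval (mh x)).1 = h x.
Proof.
move=> /(B_class_postcomp (I := hom_C_Q1))/(_ (eval_at \o h))[k kE].
have Mhk x : (h x, - k x) \in kerpred zetaM.
  rewrite unfold_in; apply/eqP; apply: funext => phi.
  have zeta_k : zeta (k x phi) = phi (h x) := congr1 (fun f => f phi) (kE x).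
  by rewrite -[LHS]/(phi (h x) + zeta (- k x phi)) linearN zeta_k subrr.
have mhL : linear (fun x => KerMod (Mhk x)).
  by move=> r x y; apply: val_inj; exact: (linearP (lin_pair h (-%R \o k))).
by exists (linmap mhL).
Qed.

Lemma B_class_Cogen (X : rmodType R) : B_class zeta X -> Cogen (T * M)%type X.
Proof.
move=> BX; have /choice[F FE] h := B_class_lift_M h BX.
exists {linear X -> C}, (fun h => lin_inr T M \o F h) => x x0.
apply/eqP; apply: contraT => /charmod_cogenerator[h]; rewrite -FE.
have /(congr1 snd) /= Fhx := x0 h.
by rewrite Fhx /= eqxx.
Qed.

Lemma Cogen_completion (X : rmodType R) : Cogen (T * M)%type X <-> B_class zeta X.
Proof. by split; [apply: Cogen_B_class | apply: B_class_Cogen]. Qed.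

End Completion.

Theorem theorem3p12 (R : pzRingType) (T Q0 Q1 : rmodType R)
  (iota : {linear T -> Q0}) (zeta : {linear Q0 -> Q1}) :
  partial_cosilting iota zeta ->
  exists (M Q0' Q1' : rmodType R) (iota' : {linear (T * M)%type -> Q0'})
         (zeta' : {linear Q0' -> Q1'}),
    cosilting iota' zeta' /\
    (forall X : rmodType R, B_class zeta X <-> B_class zeta' X).
Proof.
move=> T_partial; exists (M zeta), _, _, (iota' iota zeta), (zeta' zeta).
split; last exact: B_class_completion.
split; first exact: completion_copresentation T_partial.
by move=> X; rewrite (Cogen_completion T_partial); exact: B_class_completion.
Qed.
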